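(* Let $\mathfrak L=\mathbb V\oplus\mathbb W$ be a color gLt-algebra admitting a quasi-multiplicative basis $\mathfrak B=\{e_i\}_{i\in I}$ of $\mathbb W\neq 0$. If $\mathfrak L$ is simple, then any two elements of the index set $I$ are connected.
   Context: Let $\mathbb F$ be a field, $\mathbb G$ an abelian group, $n\ge 2$, and $\epsilon:\mathbb G\times\mathbb G\to\mathbb F\setminus\{0\}$ a bicharacter ($\epsilon(k,g+h)=\epsilon(k,g)\epsilon(k,h)$, $\epsilon(g+h,k)=\epsilon(g,k)\epsilon(h,k)$, $\epsilon(g,h)\epsilon(h,g)=1$). A graded $n$-ary algebra is a $\mathbb G$-graded vector space $\mathfrak L=\bigoplus_{g\in\mathbb G}\mathfrak L_g$ with an $n$-linear map $\langle\cdot,\dots,\cdot\rangle:\mathfrak L^n\to\mathfrak L$ such that $\langle\mathfrak L_{g_1},\dots,\mathfrak L_{g_n}\rangle\subset\mathfrak L_{g_1+\dots+g_n}$. For $\sigma\in\mathbb S_n$ write $\langle x_1,\dots,x_n\rangle_\sigma:=\langle x_{\sigma(1)},\dots,x_{\sigma(n)}\rangle$; for subsets $A_1,\dots,A_n$, $\langle A_1,\dots,A_n\rangle_\sigma$ denotes the linear span of all $\langle x_1,\dots,x_n\rangle_\sigma$ with $x_r\in A_r$. A color gLt-algebra is a graded $n$-ary algebra satisfying, for each $k=1,\dots,n$ and fixed scalars $\alpha^{\sigma_1,\sigma_2}_{i,j,k}\in\mathbb F$, the color version (each term on the right multiplied by the product of values of $\epsilon$ on the degrees of the homogeneous arguments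 transposed in passing from the left-hand order to the order of that term) of the identity $\langle y_1,\dots,y_{k-1},\langle x_1,\dots,x_n\rangle,y_k,\dots,y_{n-1}\rangle=\sum_{1\le i,j\le n,\,\sigma_1\in\mathbb S_n,\,\sigma_2\in\mathbb S_{n-1}}\alpha^{\sigma_1,\sigma_2}_{i,j,k}\langle x_{\sigma_1(1)},\dots,x_{\sigma_1(i-1)},\langle y_{\sigma_2(1)},\dots,y_{\sigma_2(j-1)},x_{\sigma_1(i)},y_{\sigma_2(j)},\dots,y_{\sigma_2(n-1)}\rangle,x_{\sigma_1(i+1)},\dots,x_{\sigma_1(n)}\rangle$. A $\mathbb G$-graded subspace $\mathcal I\subset\mathfrak L$ is a color gLt-ideal if $\langle\mathcal I,\mathfrak L,\dots,\mathfrak L\rangle_\sigma\subset\mathcal I$ for every $\sigma\in\mathbb S_n$. $\mathfrak L$ is simple if its only color gLt-ideals are $\{0\}$ and $\mathfrak L$. $\mathfrak L$ admits a quasi-multiplicative basis if $\mathfrak L=\mathbb V\oplus\mathbb W$ with $\mathbb V$, $\mathbb W\ne0$ graded subspaces and $\mathfrak B=\{e_i\}_{i\in I}$ a basis of homogeneous elements of $\mathbb W$ such that: (1) for $i_1,\dots,i_n\in I$, either $\langle e_{i_1},\dots,e_{i_n}\rangle\in\mathbb Fe_j$ for some $j\in I$ or $\langle e_{i_1},\dots,e_{i_n}\rangle\in\mathbb V$; (2) for $0<k<n$, $i_1,\dots,i_k\in I$ and $\sigma\in\mathbb S_n$, $\langle e_{i_1},\dots,e_{i_k},\mathbb V,\dots,\mathbb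 V\rangle_\sigma\subset\mathbb Fe_{j_\sigma}$ for some $j_\sigma\in I$; (3) either $\langle\mathbb V,\dots,\mathbb V\rangle\subset\mathbb Fe_j$ for some $j\in I$ or $\langle\mathbb V,\dots,\mathbb V\rangle\subset\mathbb V$. Index maps: let $v$ be a symbol not in $I$, $\mathfrak I:=I\,\dot\cup\,\{v\}$; for each $j\in\mathfrak I$ take a new symbol $\overline j$, $\overline I:=\{\overline i:i\in I\}$, $\overline{\mathfrak I}:=\overline I\,\dot\cup\,\{\overline v\}$; set $\overline{(\overline j)}:=j$, $\overline J:=\{\overline j:j\in J\}$ for a set $J$ of symbols ($\overline\emptyset=\emptyset$). Put $u_j:=e_j$ for $j\in I$ and $u_v:=\mathbb V$. For $\sigma\in\mathbb S_n$ and $(j_1,\dots,j_n)\in\mathfrak I^n$ let $a_\sigma(j_1,\dots,j_n)=\{r\}$ if $r\in I$ and $0\ne\langle u_{j_1},\dots,u_{j_n}\rangle_\sigma\subset\mathbb Fe_r$, $=\{v\}$ if $0\ne\langle u_{j_1},\dots,u_{j_n}\rangle_\sigma\subset\mathbb V$, and $=\emptyset$ otherwise. For $j,j_2,\dots,j_n\in\mathfrak I$ let $b_\sigma(j,\overline j_2,\dots,\overline j_n):=\{x\in\mathfrak I: a_\sigma(x,j_2,\dots,j_n)=\{j\}\}$. Define $\mu$ on $(\mathfrak I\,\dot\cup\,\overline{\mathfrak I})\times(\mathfrak I^{n-1}\,\dot\cup\,\overline{\mathfrak I}^{n-1})$ with values subsets of $\mathfrak I$ by: $\mu(j,j_1,\dots,j_{n-1})=\bigcup_{\sigma\in\mathbb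 S_n}a_\sigma(j,j_1,\dots,j_{n-1})$ for $j,j_1,\dots,j_{n-1}\in\mathfrak I$; $\mu(j,\overline j_1,\dots,\overline j_{n-1})=\bigcup_{\sigma\in\mathbb S_n}b_\sigma(j,\overline j_1,\dots,\overline j_{n-1})$ for $j,j_1,\dots,j_{n-1}\in\mathfrak I$; $\mu(\overline j,j_1,\dots,j_{n-1})=\bigcup_{1\le k\le n-1,\ \sigma\in\mathbb S_n}b_\sigma(j_k,\overline j,\overline j_1,\dots,\overline j_{k-1},\overline j_{k+1},\dots,\overline j_{n-1})$ for $j,j_1,\dots,j_{n-1}\in\mathfrak I$; and $\mu(\overline j,\overline j_1,\dots,\overline j_{n-1})=\emptyset$. Define $\phi$ on pairs $(J,X)$ with $J\subset I\,\dot\cup\,\overline I$ and $X\in\mathfrak I^{n-1}\,\dot\cup\,\overline{\mathfrak I}^{n-1}$ by $\phi(\emptyset,X)=\emptyset$ and, for $J\ne\emptyset$, $\phi(J,X):=K\cup\overline K$ where $K:=\big(\bigcup_{j\in J}\mu(j,X)\big)\setminus\{v\}$. Connections: for distinct $i,j\in I$, $i$ is connected to $j$ if there exist $t\ge1$, $X_1,\dots,X_t\in\mathfrak I^{n-1}\,\dot\cup\,\overline{\mathfrak I}^{n-1}$ and $\widetilde i\in\{i,\overline i\}$ such that $\phi(\{\widetilde i\},X_1)\ne\emptyset$, …, $\phi(\cdots\phi(\{\widetilde i\},X_1)\cdots,X_{t-1})\ne\emptyset$, and $j\in\phi(\cdots\phi(\phi(\{\widetilde i\},X_1),X_2)\cdots,X_t)$;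 every $i$ is connected to itself. *)

From HB Require Import structures.
From mathcomp Require Import all_boot all_order all_algebra all_fingroup.
Set Implicit Arguments. Unset Strict Implicit. Unset Printing Implicit Defensive.
Import GRing.Theory.
Local Open Scope ring_scope.

Definition subspace {F : fieldType} {L : lmodType F} (S : L -> Prop) : Prop :=
  S 0 /\ (forall x y, S x -> S y -> S (x + y)) /\ (forall (a : F) x, S x -> S (a *: x)).

Definition is_grading {F : fieldType} {G : zmodType} {L : lmodType F}
  (Lg : G -> L -> Prop) : Prop :=
  (forall g, subspace (Lg g)) /\
  (forall x : L, exists (s : seq G) (c : G -> L),
      uniq s /\ (forall g, Lg g (c g)) /\ x = \sum_(g <- s) c g) /\
  (forall (s : seq G) (c : G -> L), uniq s -> (forall g, Lg g (c g)) ->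
      \sum_(g <- s) c g = 0 -> forall g, g \in s -> c g = 0).

Definition graded_subspace {F : fieldType} {G : zmodType} {L : lmodType F}
  (Lg : G -> L -> Prop) (S : L -> Prop) : Prop :=
  subspace S /\
  forall x, S x -> exists (s : seq G) (c : G -> L),
    uniq s /\ (forall g, Lg g (c g)) /\ (forall g, g \in s -> S (c g)) /\
    x = \sum_(g <- s) c g.

Definition bicharacter {F : fieldType} {G : zmodType} (eps : G -> G -> F) : Prop :=
  (forall g h, eps g h != 0) /\
  (forall k g h, eps k (g + h) = eps k g * eps k h) /\
  (forall g h k, eps (g + h) k = eps g k * eps h k) /\
  (forall g h, eps g h * eps h g = 1).

Definition multilinear {F : fieldType} {L : lmodType F} {n : nat}
  (mu : {ffun 'I_n -> L} -> L) : Prop :=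
  forall (x : {ffun 'I_n -> L}) (k : 'I_n) (a : F) (y z : L),
    mu [ffun p => if p == k then a *: y + z else x p] =
    a *: mu [ffun p => if p == k then y else x p] +
    mu [ffun p => if p == k then z else x p].

Definition graded_nary_algebra {F : fieldType} {G : zmodType} {L : lmodType F}
  {n : nat} (Lg : G -> L -> Prop) (mu : {ffun 'I_n -> L} -> L) : Prop :=
  is_grading Lg /\ multilinear mu /\
  forall (x : {ffun 'I_n -> L}) (d : 'I_n -> G),
    (forall r, Lg (d r) (x r)) -> Lg (\sum_(r < n) d r) (mu x).

Definition permprod {L : Type} {n : nat} (mu : {ffun 'I_n -> L} -> L)
  (s : 'S_n) (x : {ffun 'I_n -> L}) : L := mu [ffun p => x (s p)].

(* ---------- the color sign ----------
   Items are labelled by naturals; [s] is the left-hand order and [t] the order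
   in a term.  Each pair (a,b) with a before b in [s] but b before a in [t] has
   been transposed and contributes eps (deg a) (deg b). *)
Definition ksign {F : fieldType} {G : zmodType} (eps : G -> G -> F)
  (deg : nat -> G) (s t : seq nat) : F :=
  \prod_(a <- s) \prod_(b <- s | (index a s < index b s)%N && (index b t < index a t)%N)
     eps (deg a) (deg b).

Definition ext {L : Type} {m : nat} (d : L) (f : 'I_m -> L) (q : nat) : L :=
  oapp f d (insub q).

(* The color gLt identity, for fixed scalars alpha i j k s1 s2
   (i, j, k are 0-based: position i in 'I_n stands for the paper's i+1). *)
Definition color_gLt {F : fieldType} {G : zmodType} {L : lmodType F} {n : nat}
  (eps : G -> G -> F) (Lg : G -> L -> Prop) (mu : {ffun 'I_n -> L} -> L)
  (alpha : 'I_n -> 'I_n -> 'I_n -> 'S_n -> 'S_n.-1 -> F) : Prop :=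
  forall (k : 'I_n) (x : {ffun 'I_n -> L}) (dx : 'I_n -> G)
         (y : 'I_n.-1 -> L) (dy : 'I_n.-1 -> G),
    (forall r, Lg (dx r) (x r)) -> (forall q, Lg (dy q) (y q)) ->
    let yn := ext 0 y in
    (* labels: x_r is labelled r, y_q is labelled n + q *)
    let deg (t : nat) : G :=
      if (t < n)%N then ext 0 dx t else ext 0 dy (t - n)%N in
    let lseq : seq nat :=
      map (fun q : 'I_n.-1 => (n + val q)%N) [seq q : 'I_n.-1 <- enum 'I_n.-1 | (q < k)%N] ++
      [seq val p | p <- enum 'I_n] ++
      map (fun q : 'I_n.-1 => (n + val q)%N) [seq q : 'I_n.-1 <- enum 'I_n.-1 | (k <= q)%N] in
    mu [ffun p : 'I_n => if (p < k)%N then yn p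
                          else if p == k then mu x else yn p.-1] =
    \sum_(i < n) \sum_(j < n) \sum_(s1 : 'S_n) \sum_(s2 : 'S_n.-1)
      let ys := ext 0 (fun q => y (s2 q)) in
      let rseq : seq nat :=
        map (fun p : 'I_n => val (s1 p)) [seq p : 'I_n <- enum 'I_n | (p < i)%N] ++
        map (fun q : 'I_n.-1 => (n + val (s2 q))%N) [seq q : 'I_n.-1 <- enum 'I_n.-1 | (q < j)%N] ++
        [:: val (s1 i)] ++
        map (fun q : 'I_n.-1 => (n + val (s2 q))%N) [seq q : 'I_n.-1 <- enum 'I_n.-1 | (j <= q)%N] ++
        map (fun p : 'I_n => val (s1 p)) [seq p : 'I_n <- enum 'I_n | (i < p)%N] in
      let inner := mu [ffun q : 'I_n => if (q < j)%N then ys q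
                                         else if q == j then x (s1 i) else ys q.-1] in
      (alpha i j k s1 s2 * ksign eps deg lseq rseq) *:
        mu [ffun p : 'I_n => if p == i then inner else x (s1 p)].

Definition gLt_ideal {F : fieldType} {G : zmodType} {L : lmodType F} {n : nat}
  (Lg : G -> L -> Prop) (mu : {ffun 'I_n -> L} -> L) (S : L -> Prop) : Prop :=
  graded_subspace Lg S /\
  forall (s : 'S_n) (x : {ffun 'I_n -> L}),
    (forall r : 'I_n, val r = 0%N -> S (x r)) -> S (permprod mu s x).

Definition simple_gLt {F : fieldType} {G : zmodType} {L : lmodType F} {n : nat}
  (Lg : G -> L -> Prop) (mu : {ffun 'I_n -> L} -> L) : Prop :=
  forall S : L -> Prop, gLt_ideal Lg mu S ->
    (forall x, S x <-> x = 0) \/ (forall x, S x).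

Definition quasi_mult_basis {F : fieldType} {G : zmodType} {L : lmodType F} {n : nat}
  {I : Type} (Lg : G -> L -> Prop) (mu : {ffun 'I_n -> L} -> L)
  (V W : L -> Prop) (e : I -> L) : Prop :=
  graded_subspace Lg V /\ graded_subspace Lg W /\
  (exists v, V v /\ v <> 0) /\ (exists w, W w /\ w <> 0) /\
  (forall x, V x -> W x -> x = 0) /\
  (forall x, exists v w, V v /\ W w /\ x = v + w) /\
  (forall i, W (e i)) /\ (forall i, exists g, Lg g (e i)) /\
  (forall (m : nat) (f : 'I_m -> I) (c : 'I_m -> F), injective f ->
     \sum_(t < m) c t *: e (f t) = 0 -> forall t, c t = 0) /\
  (forall w, W w -> exists (m : nat) (f : 'I_m -> I) (c : 'I_m -> F),
     w = \sum_(t < m) c t *: e (f t)) /\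
  (forall ii : 'I_n -> I,
     (exists j (a : F), mu [ffun p => e (ii p)] = a *: e j) \/
     V (mu [ffun p => e (ii p)])) /\
  (forall k : nat, (0 < k < n)%N -> forall (ii : nat -> I) (s : 'S_n),
     exists j, forall x : {ffun 'I_n -> L},
       (forall r : 'I_n, (r < k)%N -> x r = e (ii (val r))) ->
       (forall r : 'I_n, (k <= r)%N -> V (x r)) ->
       exists a : F, permprod mu s x = a *: e j) /\
  ((exists j, forall x : {ffun 'I_n -> L}, (forall r, V (x r)) ->
       exists a : F, mu x = a *: e j) \/
   (forall x : {ffun 'I_n -> L}, (forall r, V (x r)) -> V (mu x))).

(* ---------- index maps ----------
   The index set frak I = I (+) {v} is [option I] (None = v); the barred copy is
   encoded by a boolean tag [true]. *)
Definition inU {L : Type} {I : Type} (e : I -> L) (V : L -> Prop)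
  (j : option I) (y : L) : Prop :=
  match j with Some i => y = e i | None => V y end.

Definition inLine {F : fieldType} {L : lmodType F} {I : Type} (e : I -> L)
  (V : L -> Prop) (t : option I) (z : L) : Prop :=
  match t with Some r => exists c : F, z = c *: e r | None => V z end.

Definition gens {L : Type} {n : nat} {I : Type} (mu : {ffun 'I_n -> L} -> L)
  (e : I -> L) (V : L -> Prop) (s : 'S_n) (js : 'I_n -> option I) (z : L) : Prop :=
  exists x : {ffun 'I_n -> L}, (forall r, inU e V (js r) (x r)) /\ z = permprod mu s x.

Definition amap {F : fieldType} {L : lmodType F} {n : nat} {I : Type}
  (mu : {ffun 'I_n -> L} -> L) (e : I -> L) (V : L -> Prop)
  (s : 'S_n) (js : 'I_n -> option I) (t : option I) : Prop :=
  (exists z, gens mu e V s js z /\ z <> 0) /\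
  (forall z, gens mu e V s js z -> inLine e V t z).

Definition consI {n : nat} {I : Type} (x : option I) (js : 'I_n.-1 -> option I)
  : 'I_n -> option I :=
  fun p => if val p is q.+1 then ext None js q else x.

(* x \in b_s(j, bar j_2, ..., bar j_n)  iff  a_s(x, j_2, ..., j_n) = {j} *)
Definition bmap {F : fieldType} {L : lmodType F} {n : nat} {I : Type}
  (mu : {ffun 'I_n -> L} -> L) (e : I -> L) (V : L -> Prop)
  (s : 'S_n) (j : option I) (js : 'I_n.-1 -> option I) (x : option I) : Prop :=
  forall t, amap mu e V s (consI x js) t <-> t = j.

(* (j, j_1, ..., j_{k-1}, j_{k+1}, ..., j_{n-1}) for k : 'I_n.-1 (0-based) *)
Definition remk {n : nat} {I : Type} (j : option I) (js : 'I_n.-1 -> option I)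
  (k : 'I_n.-1) : 'I_n.-1 -> option I :=
  fun p => if val p is q.+1 then
             (if (q < k)%N then ext None js q else ext None js q.+1)
           else j.

(* t \in mu(a, X) ; a = (barred?, j), X = (barred?, (j_1,...,j_{n-1})) *)
Definition muI {F : fieldType} {L : lmodType F} {n : nat} {I : Type}
  (mu : {ffun 'I_n -> L} -> L) (e : I -> L) (V : L -> Prop)
  (a : bool * option I) (X : bool * ('I_n.-1 -> option I)) (t : option I) : Prop :=
  match a, X with
  | (false, j), (false, js) => exists s : 'S_n, amap mu e V s (consI j js) t
  | (false, j), (true, js)  => exists s : 'S_n, bmap mu e V s j js t
  | (true, j),  (false, js) =>
      exists (k : 'I_n.-1) (s : 'S_n), bmap mu e V s (js k) (remk j js k) t
  | (true, _),  (true, _)   => False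
  end.

(* phi(J, X) = K \cup bar K, K = (\bigcup_{j in J} mu(j, X)) \ {v};
   subsets of I (+) bar I are predicates on bool * I (true = barred).
   (For J empty this is empty, as required.) *)
Definition phi {F : fieldType} {L : lmodType F} {n : nat} {I : Type}
  (mu : {ffun 'I_n -> L} -> L) (e : I -> L) (V : L -> Prop)
  (J : bool * I -> Prop) (X : bool * ('I_n.-1 -> option I)) : bool * I -> Prop :=
  fun z => exists j : bool * I, J j /\ muI mu e V (j.1, Some j.2) X (Some z.2).

Fixpoint phin {F : fieldType} {L : lmodType F} {n : nat} {I : Type}
  (mu : {ffun 'I_n -> L} -> L) (e : I -> L) (V : L -> Prop)
  (J : bool * I -> Prop) (X : nat -> bool * ('I_n.-1 -> option I)) (m : nat)
  : bool * I -> Prop :=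
  match m with
  | 0 => J
  | m'.+1 => phi mu e V (phin mu e V J X m') (X m')
  end.

Definition connected {F : fieldType} {L : lmodType F} {n : nat} {I : Type}
  (mu : {ffun 'I_n -> L} -> L) (e : I -> L) (V : L -> Prop) (i j : I) : Prop :=
  i = j \/
  (i <> j /\
   exists (t : nat) (X : nat -> bool * ('I_n.-1 -> option I)) (b : bool),
     (1 <= t)%N /\
     (forall m, (0 < m < t)%N ->
        exists z, phin mu e V (fun z => z = (b, i)) X m z) /\
     phin mu e V (fun z => z = (b, i)) X t (false, j)).

(* Fix i and let S be the span of the basis vectors e_c with c connected to i together
   with the products <e_c1, ..., e_cn> that lie in V and have some c_p connected to i.
   S is a graded subspace containing e_i, and it is an ideal.  A product with one factor
   e_c (c connected to i) and the other factors basis vectors or elements of V is, by the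
   quasi-multiplicative axioms, either a multiple a e_r, and then a_sigma(c, ...) = {r}
   connects r to c, or a product of basis vectors lying in V, and a nonzero such product
   connects all of its indices to each other through the barred maps b_sigma(v, ...).
   A product with a factor <e_c1, ..., e_cn> in V is first expanded by the color gLt
   identity into products of the previous kind.  By simplicity S = L, so e_j lies in S;
   projecting onto W along V and using the linear independence of the basis gives that
   j is connected to i. *)

From HB Require Import structures.
From mathcomp Require Import all_boot all_order all_algebra all_fingroup.
From mathcomp Require Import zify boolp.

Set Implicit Arguments.
Unset Strict Implicit.
Unset Printing Implicit Defensive.

Import GRing.Theory.
Local Open Scope ring_scope.

Lemma ext_lt (A : Type) m (f : 'I_m -> A) d q (lt_qm : (q < m)%N) :
  ext d f q = f (Ordinal lt_qm).
Proof. by rewrite /ext insubT /=; congr f; apply: val_inj. Qed.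

Lemma ext_ord (A : Type) m (f : 'I_m -> A) d (q : 'I_m) : ext d f q = f q.
Proof. by rewrite /ext valK. Qed.

Lemma ext_cases (A : Type) m (f : 'I_m -> A) d q :
  ext d f q = d \/ exists r, ext d f q = f r.
Proof. by rewrite /ext; case: insub => [r|]; [right; exists r | left]. Qed.

Lemma reinsert_slot (A : Type) m (d w : A) (y : {ffun 'I_m -> A}) (k : 'I_m)
    (y' : 'I_m.-1 -> A) :
  (forall q : 'I_m.-1, y' q = ext d y (if (q < k)%N then val q else q.+1)) ->
  [ffun p : 'I_m => if (p < k)%N then ext d y' p else if p == k then w else ext d y' p.-1] =
  [ffun p => if p == k then w else y p].
Proof.
move=> y'E; apply/ffunP => p; rewrite !ffunE.
have [lt_pk | le_kp] := ltnP p k.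
  have lt_pm1 : (p < m.-1)%N by move: (ltn_ord k); lia.
  rewrite (ext_lt _ _ lt_pm1) y'E /= lt_pk ext_ord.
  by have [eq_pk | //] := eqVneq p k; rewrite eq_pk ltnn in lt_pk.
case: eqP => [// | neq_pk]; have lt_kp : (k < p)%N.
  by rewrite ltn_neqAle le_kp andbT; apply/eqP => /val_inj eq_kp; apply: neq_pk.
have lt_p1m1 : (p.-1 < m.-1)%N by move: (ltn_ord p); lia.
have lt_pm : (p.-1.+1 < m)%N by move: (ltn_ord p); lia.
rewrite (ext_lt _ _ lt_p1m1) y'E /= ltnNge (_ : (k <= p.-1)%N) /=; last by lia.
by rewrite (ext_lt _ _ lt_pm); congr (fun_of_fin y); apply: val_inj => /=; lia.
Qed.

Section Permutations.
Variable n : nat.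

Lemma exists_perm_prefix (l : seq 'I_n) : uniq l ->
  exists s : 'S_n, forall r : 'I_n,
    ((s r \in l) = (r < size l)%N) /\ ((r < size l)%N -> s r = nth r l r).
Proof.
move=> uniq_l; set sq := l ++ [seq x <- enum 'I_n | x \notin l].
have uniq_sq : uniq sq.
  rewrite cat_uniq uniq_l filter_uniq ?enum_uniq // andbT.
  by apply/hasPn => x; rewrite mem_filter => /andP[].
have size_sq : size sq = n.
  rewrite -[RHS](size_enum_ord n); apply/perm_size/uniq_perm; rewrite ?enum_uniq //.
  by move=> x; rewrite mem_enum mem_cat mem_filter mem_enum andbT orbN.
pose f (r : 'I_n) := nth r sq r.
have nth_sq (r r' : 'I_n) : nth r sq r = nth r' sq r.
  by apply: set_nth_default; rewrite size_sq.
have f_inj : injective f.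
  move=> r1 r2; rewrite /f (nth_sq r2 r1) => /eqP.
  by rewrite nth_uniq ?size_sq // => /eqP/val_inj.
exists (perm f_inj) => r; rewrite permE /f nth_cat.
case: ltnP => [lt_rl | le_lr]; first by rewrite mem_nth.
split=> //; apply/negbTE.
have : nth r [seq x <- enum 'I_n | x \notin l] (r - size l) \in
       [seq x <- enum 'I_n | x \notin l].
  apply: mem_nth; move: size_sq (ltn_ord r) le_lr; rewrite /sq size_cat.
  by set a := size l; set b := size (filter _ _); lia.
by rewrite mem_filter => /andP[].
Qed.

Lemma exists_perm_front (P : {set 'I_n}) :
  exists s : 'S_n, forall r : 'I_n, (s r \in P) = (r < #|P|)%N.
Proof.
have [s Hs] := exists_perm_prefix (enum_uniq (mem P)).
by exists s => r; have [H _] := Hs r; rewrite cardE -H mem_enum.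
Qed.

Lemma exists_perm_01 (a b : 'I_n) (lt_0n : (0 < n)%N) (lt_1n : (1 < n)%N) :
  a != b -> exists s : 'S_n, s (Ordinal lt_0n) = a /\ s (Ordinal lt_1n) = b.
Proof.
move=> neq_ab; have uniq_ab : uniq [:: a; b] by rewrite /= inE neq_ab.
have [s Hs] := exists_perm_prefix uniq_ab.
by exists s; split; [case: (Hs (Ordinal lt_0n)) => _ -> | case: (Hs (Ordinal lt_1n)) => _ ->].
Qed.

End Permutations.

Lemma sum_regroup (T K : eqType) (R : nmodType) (l : seq T) (h : T -> K)
    (U : seq K) (f : T -> R) :
  uniq U -> {subset map h l <= U} ->
  \sum_(k <- U) \sum_(q <- l | h q == k) f q = \sum_(q <- l) f q.
Proof.
move=> uniq_U sub_hU.
under eq_bigr do rewrite big_mkcond.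
rewrite exchange_big /= [LHS]big_seq [RHS]big_seq; apply: eq_bigr => q lq.
rewrite -big_mkcond (big_rem (h q)) ?sub_hU ?map_f // eqxx big1_seq ?Monoid.simpm //.
by move=> k /andP[/eqP <-]; rewrite mem_rem_uniqF.
Qed.

(** * Linear spans and multilinear maps *)

Section Spans.
Variables (F : fieldType) (L : lmodType F).
Implicit Types (S P Q : L -> Prop) (x y : L).

Lemma subspace0 {S} : subspace S -> S 0. Proof. by case. Qed.

Lemma subspaceD {S x y} : subspace S -> S x -> S y -> S (x + y).
Proof. by case=> _ [+ _]; apply. Qed.

Lemma subspaceZ {S} {a : F} {x} : subspace S -> S x -> S (a *: x).
Proof. by case=> _ [_]; apply. Qed.

Lemma subspaceB {S x y} : subspace S -> S x -> S y -> S (x - y).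
Proof. by move=> hS Sx Sy; rewrite -scaleN1r; apply: subspaceD hS Sx (subspaceZ hS Sy). Qed.

Lemma subspace_sum {S} {T : Type} {r : seq T} {P : pred T} {f : T -> L} :
  subspace S -> (forall t, P t -> S (f t)) -> S (\sum_(t <- r | P t) f t).
Proof.
move=> hS Sf; elim/big_rec: _ => [|t x Pt Sx]; first exact: subspace0 hS.
exact: subspaceD hS (Sf t Pt) Sx.
Qed.

Definition lspan P x : Prop :=
  exists l : seq (F * L), (forall q, q \in l -> P q.2) /\ x = \sum_(q <- l) q.1 *: q.2.

Lemma lspan_gen P x : P x -> lspan P x.
Proof. by exists [:: (1, x)]; rewrite big_seq1 scale1r; split=> // q /[!inE]/eqP->. Qed.

Lemma lspan_subspace P : subspace (lspan P).
Proof.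
split; first by exists [::]; rewrite big_nil.
split=> [x y [l1 [P1 ->]] [l2 [P2 ->]] | a x [l [Pl ->]]].
  by exists (l1 ++ l2); rewrite big_cat; split=> // q /[!mem_cat]/orP[/P1|/P2].
exists [seq (a * q.1, q.2) | q <- l]; split; first by move=> q /mapP[q' /Pl ? ->].
by rewrite big_map scaler_sumr; apply: eq_bigr => q _; rewrite scalerA.
Qed.

Lemma lspan_mono P Q x : (forall y, P y -> Q y) -> lspan P x -> lspan Q x.
Proof. by move=> PQ [l [Pl ->]]; exists l; split=> // q /Pl /PQ. Qed.

End Spans.

Definition hdeg (G : zmodType) (L : Type) (Lg : G -> L -> Prop) (u : L) : G :=
  if pselect (exists g, Lg g u) is left ex then sval (cid ex) else 0.

Lemma hdegP (G : zmodType) (L : Type) (Lg : G -> L -> Prop) u :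
  (exists g, Lg g u) -> Lg (hdeg Lg u) u.
Proof. by rewrite /hdeg; case: pselect => // ex _; exact: svalP (cid ex). Qed.

Lemma lspan_graded (F : fieldType) (G : zmodType) (L : lmodType F)
    (Lg : G -> L -> Prop) (P : L -> Prop) :
  (forall g, subspace (Lg g)) -> (forall u, P u -> exists g, Lg g u) ->
  graded_subspace Lg (lspan P).
Proof.
move=> subLg homP; split; first exact: lspan_subspace.
move=> _ [l [Pl ->]].
exists (undup [seq hdeg Lg q.2 | q <- l]), (fun g => \sum_(q <- l | hdeg Lg q.2 == g) q.1 *: q.2).
split; first exact: undup_uniq.
split.
  move=> g; rewrite big_seq_cond; apply: subspace_sum => // q /andP[lq /eqP <-].
  exact: subspaceZ (subLg _) (hdegP (homP _ (Pl _ lq))).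
split; last by rewrite sum_regroup ?undup_uniq // => g; rewrite mem_undup.
move=> g _; exists [seq q <- l | hdeg Lg q.2 == g]; rewrite big_filter; split=> //.
by move=> q; rewrite mem_filter => /andP[_ /Pl].
Qed.

Section Multilinear.
Variables (F : fieldType) (L : lmodType F) (n : nat) (mu : {ffun 'I_n -> L} -> L).
Hypothesis mu_lin : multilinear mu.

Lemma multilinear_slot (f : 'I_n -> L) k (a : F) u v :
  mu [ffun p => if p == k then a *: u + v else f p] =
  a *: mu [ffun p => if p == k then u else f p] + mu [ffun p => if p == k then v else f p].
Proof.
have setE w :
    [ffun p => if p == k then w else finfun f p] = [ffun p => if p == k then w else f p].
  by apply/ffunP => p; rewrite !ffunE.
by rewrite -!setE mu_lin.
Qed.

Lemma multilinear_slot0 (f : 'I_n -> L) k : mu [ffun p => if p == k then 0 else f p] = 0.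
Proof.
have := multilinear_slot f k 1 0 0; rewrite scaler0 addr0 scale1r => /eqP.
by rewrite -subr_eq subrr eq_sym => /eqP.
Qed.

Lemma multilinear_slotZ (f : 'I_n -> L) k (a : F) u :
  mu [ffun p => if p == k then a *: u else f p] =
  a *: mu [ffun p => if p == k then u else f p].
Proof. by have := multilinear_slot f k a u 0; rewrite addr0 multilinear_slot0 addr0. Qed.

Lemma slot_id (z : {ffun 'I_n -> L}) k : [ffun p => if p == k then z k else z p] = z.
Proof. by apply/ffunP => p; rewrite ffunE; case: eqP => // ->. Qed.

Lemma multilinear_lspan (P : 'I_n -> L -> Prop) (Q : L -> Prop) : subspace Q ->
  (forall z : {ffun 'I_n -> L}, (forall p, P p (z p)) -> Q (mu z)) ->
  forall z : {ffun 'I_n -> L}, (forall p, lspan (P p) (z p)) -> Q (mu z).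
Proof.
move=> subQ Qgen.
suff Qprefix m (z : {ffun 'I_n -> L}) :
    (forall p : 'I_n, (p < m)%N -> lspan (P p) (z p)) ->
    (forall p : 'I_n, (m <= p)%N -> P p (z p)) -> Q (mu z).
  by move=> z Pz; apply: (Qprefix n) => // p; rewrite leqNgt ltn_ord.
elim: m z => [|m IH] z spanz Pz; first by apply: Qgen => p; apply: Pz.
have [le_nm | lt_mn] := leqP n m.
  by apply: IH => p lt_pm; [apply: spanz; apply: ltnW | move: (ltn_ord p); lia].
pose k : 'I_n := Ordinal lt_mn.
have [l [Pl zk]] := spanz k (ltnSn m); rewrite -(slot_id z k) zk {zk}.
elim: l Pl => [|q l IHl] Pl; first by rewrite big_nil multilinear_slot0; apply: subspace0.
rewrite big_cons multilinear_slot; apply: subspaceD => //.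
  apply: subspaceZ => //; apply: IH => p; rewrite ffunE.
    by case: eqP => [-> /[!ltnn] | _ /ltnW /spanz].
  case: eqP => [-> _ | neq_pk le_mp]; first by apply: Pl; rewrite mem_head.
  apply: Pz; rewrite ltn_neqAle le_mp andbT; apply/eqP => eq_mp.
  by apply: neq_pk; apply: val_inj; rewrite /= eq_mp.
by apply: IHl => q' lq'; apply: Pl; rewrite inE lq' orbT.
Qed.

End Multilinear.

(** * Connections *)

Section IndexMaps.
Variables (F : fieldType) (L : lmodType F) (n : nat) (I : Type)
  (mu : {ffun 'I_n -> L} -> L) (e : I -> L) (V : L -> Prop).
Local Notation connected := (connected mu e V).

Lemma phin_eq (J : bool * I -> Prop) X X' m : (forall k, (k < m)%N -> X k = X' k) ->
  phin mu e V J X m = phin mu e V J X' m.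
Proof. by elim: m => //= m IH XX'; rewrite IH ?XX' // => k /ltnW; apply: XX'. Qed.

Lemma connected_refl i : connected i i.
Proof. by left. Qed.

Lemma connected_step i c b X r :
  connected i c -> muI mu e V (b, Some c) X (Some r) -> connected i r.
Proof.
move=> conn_ic mu_cr; have [<- | neq_ir] := EM (i = r); first exact: connected_refl.
right; split=> //; case: conn_ic => [eq_ic | [_ [t [Xs [b0 [t_ge1 [Xs_ne Xs_c]]]]]]].
  exists 1%N, (fun=> X), b; split=> //; split; first by move=> m /andP[/leq_trans/[apply]].
  by exists (b, i); rewrite eq_ic.
pose Xs' m := if (m < t)%N then Xs m else X.
have phin_prefix m : (m <= t)%N ->
    phin mu e V (eq^~ (b0, i)) Xs' m = phin mu e V (eq^~ (b0, i)) Xs m.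
  by move=> le_mt; apply: phin_eq => k lt_km; rewrite /Xs' (leq_trans lt_km le_mt).
exists t.+1, Xs', b0; split=> //; split=> [m /andP[m_gt0] | /=].
  rewrite ltnS leq_eqVlt => /orP[/eqP -> | lt_mt].
    by rewrite phin_prefix //; exists (false, c).
  by rewrite phin_prefix ?(ltnW lt_mt) //; apply: Xs_ne; rewrite m_gt0.
rewrite phin_prefix // /Xs' ltnn; exists (b, c); split=> //.
by case: t t_ge1 Xs_c {Xs_ne phin_prefix Xs'}.
Qed.

Lemma gensP (s : 'S_n) (js : 'I_n -> option I) w :
  gens mu e V s js w <->
  exists z : {ffun 'I_n -> L}, (forall p, inU e V (js (s p)) (z p)) /\ w = mu z.
Proof.
split=> [[x [js_x ->]] | [z [js_z ->]]].
  by exists [ffun p => x (s p)]; split=> // p; rewrite ffunE.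
exists [ffun r => z ((s^-1)%g r)]; split=> [r | ].
  by rewrite ffunE; have := js_z ((s^-1)%g r); rewrite permKV.
by rewrite /permprod; congr mu; apply/ffunP => p; rewrite !ffunE permK.
Qed.

Lemma consI_head_tail (T : 'I_n -> option I) (p0 : 'I_n) :
  val p0 = 0%N -> consI (T p0) (fun q => ext None T q.+1) = T.
Proof.
move=> p0_0; apply: funext => p; rewrite /consI.
case p_eq: (val p) => [|q]; first by congr T; apply: val_inj; rewrite p_eq p0_0.
have lt_qn : (q < n.-1)%N by move: (ltn_ord p); rewrite p_eq; lia.
by rewrite (ext_lt _ _ lt_qn) /= -p_eq ext_ord.
Qed.

Lemma consI_remk_head (T : 'I_n -> option I) (p0 p1 : 'I_n) (q0 : 'I_n.-1)
    (js : 'I_n.-1 -> option I) :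
  val p0 = 0%N -> val p1 = 1%N -> val q0 = 0%N ->
  (forall q : 'I_n.-1, (0 < q)%N -> js q = ext None T q.+1) ->
  consI (T p0) (remk (T p1) js q0) = T.
Proof.
move=> p0_0 p1_1 q0_0 js_tail; apply: funext => p; rewrite /consI.
case p_eq: (val p) => [|q]; first by congr T; apply: val_inj; rewrite p_eq p0_0.
have lt_qn : (q < n.-1)%N by move: (ltn_ord p); rewrite p_eq; lia.
rewrite (ext_lt _ _ lt_qn) /remk /= q0_0.
case: q p_eq lt_qn => [|q] p_eq lt_qn; first by congr T; apply: val_inj; rewrite p_eq p1_1.
by rewrite (ext_lt _ _ lt_qn) js_tail //= -p_eq ext_ord.
Qed.

End IndexMaps.

Section QuasiMultiplicativeBasis.
Variables (F : fieldType) (G : zmodType) (n : nat) (L : lmodType F)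
  (Lg : G -> L -> Prop) (mu : {ffun 'I_n -> L} -> L) (V W : L -> Prop)
  (I : eqType) (e : I -> L).
Hypothesis qmb : quasi_mult_basis Lg mu V W e.

Lemma qmb_subspaceV : subspace V.
Proof. by case: qmb => [[]]. Qed.

Lemma qmb_subspaceW : subspace W.
Proof. by case: qmb => _ [[]]. Qed.

Lemma qmb_gradedV : graded_subspace Lg V.
Proof. by case: qmb. Qed.

Lemma qmb_capVW x : V x -> W x -> x = 0.
Proof. by case: qmb => _ [_ [_ [_ [capVW _]]]]; apply: capVW. Qed.

Lemma qmb_addVW x : exists v w, V v /\ W w /\ x = v + w.
Proof. by case: qmb => _ [_ [_ [_ [_ [addVW _]]]]]. Qed.

Lemma qmb_basisW c : W (e c).
Proof. by case: qmb => _ [_ [_ [_ [_ [_ [eW _]]]]]]. Qed.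

Lemma qmb_basis_hom c : exists g, Lg g (e c).
Proof. by case: qmb => _ [_ [_ [_ [_ [_ [_ [ehom _]]]]]]]. Qed.

Lemma qmb_basis_free m (f : 'I_m -> I) (a : 'I_m -> F) :
  injective f -> \sum_(t < m) a t *: e (f t) = 0 -> forall t, a t = 0.
Proof. by case: qmb => _ [_ [_ [_ [_ [_ [_ [_ [free _]]]]]]]]; apply: free. Qed.

Lemma qmb_basis_span w : W w ->
  exists m (f : 'I_m -> I) (a : 'I_m -> F), w = \sum_(t < m) a t *: e (f t).
Proof. by case: qmb => _ [_ [_ [_ [_ [_ [_ [_ [_ [span _]]]]]]]]]; apply: span. Qed.

Lemma qmb_product_basis (ii : 'I_n -> I) :
  (exists r (a : F), mu [ffun p => e (ii p)] = a *: e r) \/ V (mu [ffun p => e (ii p)]).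
Proof. by case: qmb => _ [_ [_ [_ [_ [_ [_ [_ [_ [_ [prod _]]]]]]]]]]. Qed.

Lemma qmb_product_mixed k : (0 < k < n)%N -> forall (ii : nat -> I) (s : 'S_n),
  exists r, forall x : {ffun 'I_n -> L},
    (forall p : 'I_n, (p < k)%N -> x p = e (ii p)) ->
    (forall p : 'I_n, (k <= p)%N -> V (x p)) ->
    exists a : F, permprod mu s x = a *: e r.
Proof. by case: qmb => _ [_ [_ [_ [_ [_ [_ [_ [_ [_ [_ [mixed _]]]]]]]]]]]; apply: mixed. Qed.

Lemma basis_free_seq (s : seq I) (a : I -> F) : uniq s ->
  \sum_(c <- s) a c *: e c = 0 -> forall c, c \in s -> a c = 0.
Proof.
move=> uniq_s sum0 c sc.
have nth_inj : injective (fun t : 'I_(size s) => nth c s t).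
  by move=> t1 t2 /eqP; rewrite nth_uniq // => /eqP/val_inj.
have sumE : \sum_(t < size s) a (nth c s t) *: e (nth c s t) = \sum_(d <- s) a d *: e d.
  by rewrite [RHS](big_nth c) big_mkord.
have := qmb_basis_free nth_inj (a := fun t => a (nth c s t)); rewrite sumE sum0.
by move=> /(_ erefl (Ordinal (etrans (index_mem c s) sc))); rewrite /= nth_index.
Qed.

Lemma basis_mem_lspan (l : seq (F * I)) c :
  e c = \sum_(q <- l) q.1 *: e q.2 -> c \in map snd l.
Proof.
move=> ec_sum; apply: contraT => notin_c.
pose U := c :: undup (map snd l).
have uniq_U : uniq U by rewrite /= mem_undup notin_c undup_uniq.
have coordE : \sum_(k <- U) (\sum_(q <- l | q.2 == k) q.1) *: e k = e c.
  rewrite ec_sum -(@sum_regroup _ _ _ l snd U (fun q => q.1 *: e q.2) uniq_U); last first.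
    by move=> k kl; rewrite inE mem_undup kl orbT.
  by apply: eq_bigr => k _; rewrite scaler_suml; apply: eq_bigr => q /eqP ->.
have deltaE : \sum_(k <- U) (k == c)%:R *: e k = e c.
  rewrite big_cons eqxx scale1r big1_seq ?addr0 // => k /andP[_].
  by rewrite mem_undup; case: eqP => [-> /[!(negbTE notin_c)] | _ _]; rewrite ?scale0r.
have := @basis_free_seq U (fun k => (k == c)%:R - \sum_(q <- l | q.2 == k) q.1) uniq_U.
rewrite (eq_bigr _ (fun k _ => scalerBl _ _ _)) sumrB deltaE coordE subrr.
move=> /(_ erefl c (mem_head _ _)) /eqP; rewrite eqxx big1_seq ?subr0 ?oner_eq0 //.
by move=> q /andP[/eqP qc lq]; move: notin_c; rewrite -qc map_f.
Qed.

Lemma basis_neq0 c : e c != 0.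
Proof.
by apply/eqP => ec0; have := @basis_mem_lspan [::] c; rewrite big_nil ec0 => /(_ erefl).
Qed.

Lemma basis_scale_inj (a b : F) r c : a != 0 -> a *: e r = b *: e c -> r = c.
Proof.
move=> a_neq0 ar_bc; have := @basis_mem_lspan [:: (a^-1 * b, c)] r.
by rewrite big_seq1 -scalerA -ar_bc scalerA mulVf ?scale1r // inE => /(_ erefl)/eqP.
Qed.

Lemma basis_inj : injective e.
Proof. by move=> r c erc; apply: (@basis_scale_inj 1 1); rewrite ?oner_eq0 ?scale1r. Qed.

Lemma V_scale_basis (a : F) c : V (a *: e c) -> a *: e c = 0.
Proof. by move=> Vac; apply: qmb_capVW => //; apply: subspaceZ qmb_subspaceW (qmb_basisW c). Qed.

Section SpanBasisV.
Variable P : I -> Prop.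

Definition basis_in_or_V (u : L) : Prop := (exists c, u = e c /\ P c) \/ V u.

Lemma lspan_basis_in_or_V_decomp x : lspan basis_in_or_V x ->
  exists v (s : seq (F * I)), V v /\ (forall q, q \in s -> P q.2) /\
    x = v + \sum_(q <- s) q.1 *: e q.2.
Proof.
move=> [l [Pl ->]]; elim: l Pl => [|[a u] l IHl] Pl.
  by exists 0, [::]; rewrite !big_nil addr0; split=> //; apply: subspace0 qmb_subspaceV.
rewrite big_cons; have [|v [s [Vv [Ps ->]]]] := IHl.
  by move=> q lq; apply: Pl; rewrite inE lq orbT.
case: (Pl (a, u) (mem_head _ _)) => [[c [/= -> Pc]] | /= Vu].
  exists v, ((a, c) :: s); rewrite big_cons addrCA; split=> //; split=> // q.
  by rewrite inE => /orP[/eqP -> //|]; apply: Ps.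
exists (a *: u + v), s; rewrite addrA; split=> //.
by apply: subspaceD qmb_subspaceV _ Vv; apply: subspaceZ qmb_subspaceV Vu.
Qed.

Lemma lspan_basis_in_or_V_basis c : lspan basis_in_or_V (e c) -> P c.
Proof.
move=> /lspan_basis_in_or_V_decomp [v [s [Vv [Ps ec_sum]]]].
have Ws : W (\sum_(q <- s) q.1 *: e q.2).
  by apply: (subspace_sum qmb_subspaceW) => q _; apply: subspaceZ qmb_subspaceW (qmb_basisW _).
have v0 : v = 0.
  apply: qmb_capVW Vv _; have -> : v = e c - \sum_(q <- s) q.1 *: e q.2.
    by rewrite ec_sum addrK.
  exact: subspaceB qmb_subspaceW (qmb_basisW c) Ws.
move: ec_sum; rewrite v0 add0r => /basis_mem_lspan /mapP[q /Ps Pq ->] //.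
Qed.

End SpanBasisV.

Hypothesis n_ge2 : (1 < n)%N.
Local Notation connected := (connected mu e V).

Let n_gt0 : (0 < n)%N := ltnW n_ge2.
Let n1_gt0 : (0 < n.-1)%N. Proof. by case: n n_ge2 => [|[|]]. Qed.
Let ord_0 : 'I_n := Ordinal n_gt0.
Let ord_1 : 'I_n := Ordinal n_ge2.
Let ord_0' : 'I_n.-1 := Ordinal n1_gt0.

Definition basis_or_V (u : L) : Prop := (exists c, u = e c) \/ V u.

Definition basis_index (u : L) : option I :=
  if pselect (exists c, u = e c) is left ex then Some (sval (cid ex)) else None.

Lemma basis_indexE c : basis_index (e c) = Some c.
Proof.
rewrite /basis_index; case: pselect => [ex | []]; last by exists c.
by congr Some; apply: basis_inj; rewrite -(svalP (cid ex)).
Qed.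

Lemma basis_indexP u : basis_or_V u -> inU e V (basis_index u) u.
Proof.
rewrite /basis_index; case: pselect => [ex _ | no_basis [/no_basis [] | //]].
exact: svalP (cid ex).
Qed.

Lemma mixed_product_line (J : 'I_n -> option I) :
  (exists p, J p = None) -> (exists p c, J p = Some c) ->
  exists r, forall z : {ffun 'I_n -> L}, (forall p, inU e V (J p) (z p)) ->
    exists b : F, mu z = b *: e r.
Proof.
move=> [pv Jpv] [p0 [c0 Jp0]].
pose P := [set p | J p].
have [pi piP] := exists_perm_front P.
have k_gt0 : (0 < #|P|)%N by apply/card_gt0P; exists p0; rewrite inE Jp0.
have lt_kn : (#|P| < n)%N.
  have cardPC : (0 < #|~: P|)%N by apply/card_gt0P; exists pv; rewrite !inE Jpv.
  by move: (cardsC P) cardPC; rewrite card_ord; move: #|P| #|~: P| => a b; lia.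
(* axiom (2), after moving the slots carrying basis vectors to the front *)
have [r line] := qmb_product_mixed (introT andP (conj k_gt0 lt_kn))
  (ext c0 (fun p => odflt c0 (J (pi p)))) (pi^-1)%g.
exists r => z Jz.
have [b zpi] : exists b, permprod mu (pi^-1)%g [ffun p => z (pi p)] = b *: e r.
  apply: line => p; rewrite ffunE.
    by rewrite ext_ord -piP inE; have := Jz (pi p); case: (J (pi p)).
  by rewrite leqNgt -piP inE; have := Jz (pi p); case: (J (pi p)).
by exists b; rewrite -zpi /permprod; congr mu; apply/ffunP => p; rewrite !ffunE permKV.
Qed.

Lemma basis_or_V_product_cases (z : {ffun 'I_n -> L}) :
  (forall p, basis_or_V (z p)) -> (exists p c, z p = e c) ->
  (exists ii, z = [ffun p => e (ii p)]) \/
  exists r, forall z' : {ffun 'I_n -> L},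
    (forall p, inU e V (basis_index (z p)) (z' p)) -> exists b : F, mu z' = b *: e r.
Proof.
move=> zBV [p0 [c0 zp0]].
have [all_basis | not_all] := EM (forall p, exists c, z p = e c).
  left; exists (fun p => odflt c0 (basis_index (z p))); apply/ffunP => p.
  by rewrite ffunE; have [c ->] := all_basis p; rewrite basis_indexE.
right; apply: mixed_product_line; last by exists p0, c0; rewrite zp0 basis_indexE.
have [p no_basis] := (existsNP _).2 not_all.
by exists p; rewrite /basis_index; case: pselect.
Qed.

Lemma basis_or_V_product (z : {ffun 'I_n -> L}) :
  (forall p, basis_or_V (z p)) -> (exists p c, z p = e c) ->
  (exists (a : F) r, mu z = a *: e r) \/
  (V (mu z) /\ exists ii, z = [ffun p => e (ii p)]).
Proof.
move=> zBV z_basis; case: (basis_or_V_product_cases zBV z_basis) => [[ii z_ii] | [r line]].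
  rewrite z_ii; case: (qmb_product_basis ii) => [[r [a ->]] | V_ii]; first by left; exists a, r.
  by right; split=> //; exists ii.
by left; have [b ->] := line z (fun p => basis_indexP (zBV p)); exists b, r.
Qed.

Lemma basis_or_V_product_line (z : {ffun 'I_n -> L}) (a : F) r :
  (forall p, basis_or_V (z p)) -> (exists p c, z p = e c) ->
  a != 0 -> mu z = a *: e r ->
  forall z' : {ffun 'I_n -> L},
    (forall p, inU e V (basis_index (z p)) (z' p)) -> exists b : F, mu z' = b *: e r.
Proof.
move=> zBV z_basis a_neq0 mu_z.
case: (basis_or_V_product_cases zBV z_basis) => [[ii z_ii] | [r' line]] z' zz'.
  suff -> : z' = z by exists a.
  by apply/ffunP => p; have := zz' p; rewrite z_ii ffunE basis_indexE.
have [b mu_z'] := line z (fun p => basis_indexP (zBV p)).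
by rewrite (basis_scale_inj a_neq0 (etrans (esym mu_z) mu_z')); apply: line.
Qed.

Lemma connected_basis_or_V_product (z : {ffun 'I_n -> L}) k c (a : F) r i :
  (forall p, basis_or_V (z p)) -> z k = e c -> connected i c ->
  a != 0 -> mu z = a *: e r -> connected i r.
Proof.
move=> zBV zk conn_ic a_neq0 mu_z.
(* a_sigma(c, ...) = {r}, for sigma moving slot k to the front *)
pose pi := tperm ord_0 k; pose T p := basis_index (z (pi p)).
apply: (connected_step (b := false) (X := (false, fun q : 'I_n.-1 => ext None T q.+1)) conn_ic).
exists (pi^-1)%g; have <- : T ord_0 = Some c by rewrite /T tpermL zk basis_indexE.
rewrite consI_head_tail //; split.
  exists (mu z); split; last by apply/eqP; rewrite mu_z scaler_eq0 negb_or a_neq0 basis_neq0.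
  by apply/gensP; exists z; split=> // p; rewrite /T permKV; apply: basis_indexP.
move=> w /gensP [z' [Tz' ->]].
apply: (basis_or_V_product_line zBV _ a_neq0 mu_z); first by exists k, c.
by move=> p; have := Tz' p; rewrite /T permKV.
Qed.

Lemma connected_V_product (ii : 'I_n -> I) pc pl i :
  pl != pc -> connected i (ii pc) ->
  V (mu [ffun p => e (ii p)]) -> mu [ffun p => e (ii p)] != 0 -> connected i (ii pl).
Proof.
move=> neq_lc conn_ic Vmu mu_neq0.
(* ii pl lies in b_sigma(v, bar (ii pc), ...): a_sigma(ii pl, ii pc, ...) = {v} *)
have [pi [pi0 pi1]] := exists_perm_01 n_gt0 n_ge2 neq_lc.
pose T p : option I := Some (ii (pi p)).
pose js (q : 'I_n.-1) := if val q == 0%N then None else ext None T q.+1.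
have gensT w : gens mu e V (pi^-1)%g T w <-> w = mu [ffun p => e (ii p)].
  rewrite gensP; split=> [[z [Tz ->]] | ->].
    by congr mu; apply/ffunP => p; rewrite ffunE; have := Tz p; rewrite /T permKV.
  by exists [ffun p => e (ii p)]; split=> // p; rewrite ffunE /T permKV.
apply: (connected_step (b := true) (X := (false, js)) conn_ic).
exists ord_0', (pi^-1)%g => t.
have -> : Some (ii pc) = T ord_1 by rewrite /T pi1.
have -> : Some (ii pl) = T ord_0 by rewrite /T pi0.
rewrite consI_remk_head //; last by move=> q q_gt0; rewrite /js eqn0Ngt q_gt0.
split=> [[_ gen_line] | ->].
  move: (gen_line _ (proj2 (gensT _) erefl)); case: t {gen_line} => // r [a mu_ar].
  by move: mu_neq0; rewrite mu_ar V_scale_basis ?eqxx // -mu_ar.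
split; first by exists (mu [ffun p => e (ii p)]); split; [exact/gensT | exact/eqP].
by move=> w /gensT ->.
Qed.

(** * The ideal of a connection class *)

Definition ideal_gen (i : I) (u : L) : Prop :=
  (exists c, u = e c /\ connected i c) \/
  (exists ii : 'I_n -> I,
    u = mu [ffun p => e (ii p)] /\ (exists p, connected i (ii p)) /\ V u).

Lemma product_connected_slot_cases (z : {ffun 'I_n -> L}) k c i :
  (forall p, basis_or_V (z p)) -> z k = e c -> connected i c ->
  mu z = 0 \/ (exists (a : F) r, connected i r /\ mu z = a *: e r) \/
  (V (mu z) /\ exists ii, z = [ffun p => e (ii p)]).
Proof.
move=> zBV zk conn_ic.
have [[a [r mu_z]] | V_case] := basis_or_V_product zBV (ex_intro _ k (ex_intro _ c zk));
  last by right; right.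
have [a0 | a_neq0] := eqVneq a 0; first by left; rewrite mu_z a0 scale0r.
right; left; exists a, r; split=> //.
exact: connected_basis_or_V_product zBV zk conn_ic a_neq0 mu_z.
Qed.

Lemma product_connected_slot_in_span (z : {ffun 'I_n -> L}) k c i :
  (forall p, basis_or_V (z p)) -> z k = e c -> connected i c ->
  lspan (ideal_gen i) (mu z).
Proof.
move=> zBV zk conn_ic.
case: (product_connected_slot_cases zBV zk conn_ic) =>
  [-> | [[a [r [conn_ir ->]]] | [Vmu [ii z_ii]]]].
- exact: subspace0 (lspan_subspace _).
- by apply: (subspaceZ (lspan_subspace _)); apply: lspan_gen; left; exists r.
- apply: lspan_gen; right; exists ii; rewrite -z_ii; split=> //; split=> //; exists k.
  by have := zk; rewrite z_ii ffunE => /basis_inj ->.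
Qed.

Hypothesis gna : graded_nary_algebra Lg mu.

Lemma gna_subspace g : subspace (Lg g).
Proof. by case: gna => [[]]. Qed.

Lemma gna_multilinear : multilinear mu.
Proof. by case: gna => _ []. Qed.

Lemma gna_hom (x : {ffun 'I_n -> L}) (d : 'I_n -> G) :
  (forall r, Lg (d r) (x r)) -> Lg (\sum_(r < n) d r) (mu x).
Proof. by case: gna => _ [_]; apply. Qed.

Lemma gLt_term_in_span i (ii : 'I_n -> I) pc (s1 : 'S_n) (ip jp : 'I_n)
    (x zi : {ffun 'I_n -> L}) :
  (forall p, x p = e (ii p)) -> connected i (ii pc) ->
  V (mu [ffun p => e (ii p)]) -> mu [ffun p => e (ii p)] != 0 ->
  (forall q, basis_or_V (zi q)) -> zi jp = e (ii (s1 ip)) ->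
  lspan (ideal_gen i) (mu [ffun p => if p == ip then mu zi else x (s1 p)]).
Proof.
move=> xE conn_ic Vmu mu_neq0 ziBV zi_jp.
have span := lspan_subspace (ideal_gen i).
have outerBV u :
    basis_or_V u -> forall p, basis_or_V ([ffun p => if p == ip then u else x (s1 p)] p).
  by move=> uBV p; rewrite ffunE; case: eqP => _ //; left; exists (ii (s1 p)).
(* Either the inner product contains e_(ii pc), or the outer one still does. *)
have [eq_pc | neq_pc] := eqVneq (s1 ip) pc.
  rewrite eq_pc in zi_jp.
  case: (product_connected_slot_cases ziBV zi_jp conn_ic) =>
    [-> | [[a [r [conn_ir ->]]] | [Vzi _]]].
  - by rewrite (multilinear_slot0 gna_multilinear); apply: subspace0 span.
  - rewrite (multilinear_slotZ gna_multilinear); apply: (subspaceZ span).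
    apply: (product_connected_slot_in_span (k := ip) (outerBV _ _) _ conn_ir).
      by left; exists r.
    by rewrite ffunE eqxx.
  - have [p0 neq_p0] : exists p0, p0 != ip.
      by case: (eqVneq ip ord_0) => [->|]; [exists ord_1 | exists ord_0; rewrite eq_sym].
    have conn_p0 : connected i (ii (s1 p0)).
      by apply: connected_V_product conn_ic Vmu mu_neq0; rewrite -eq_pc (inj_eq perm_inj).
    apply: (product_connected_slot_in_span (k := p0) (outerBV _ _) _ conn_p0); first by right.
    by rewrite ffunE (negbTE neq_p0).
pose p0 := (s1^-1)%g pc.
have neq_p0 : p0 != ip by apply: contra_neq neq_pc => <-; rewrite permKV.
have x_p0 u : [ffun p => if p == ip then u else x (s1 p)] p0 = e (ii pc).
  by rewrite ffunE (negbTE neq_p0) permKV.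
case: (basis_or_V_product ziBV (ex_intro _ jp (ex_intro _ _ zi_jp))) => [[a [r ->]] | [Vzi _]].
  rewrite (multilinear_slotZ gna_multilinear); apply: (subspaceZ span).
  by apply: (product_connected_slot_in_span (outerBV _ _) (x_p0 _) conn_ic); left; exists r.
by apply: (product_connected_slot_in_span (outerBV _ _) (x_p0 _) conn_ic); right.
Qed.

Variables (eps : G -> G -> F) (alpha : 'I_n -> 'I_n -> 'I_n -> 'S_n -> 'S_n.-1 -> F).
Hypothesis gLt : color_gLt eps Lg mu alpha.

Definition basis_or_hom_V (u : L) : Prop := (exists c, u = e c) \/ (V u /\ exists g, Lg g u).

Lemma product_V_generator_in_span i (y : {ffun 'I_n -> L}) k (ii : 'I_n -> I) pc :
  connected i (ii pc) -> V (mu [ffun p => e (ii p)]) -> y k = mu [ffun p => e (ii p)] ->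
  (forall p, p != k -> basis_or_hom_V (y p)) -> lspan (ideal_gen i) (mu y).
Proof.
move=> conn_ic Vmu yk yBV.
have span := lspan_subspace (ideal_gen i).
pose x : {ffun 'I_n -> L} := [ffun p => e (ii p)].
have [mu0 | mu_neq0] := eqVneq (mu x) 0.
  by rewrite -(slot_id y k) yk mu0 (multilinear_slot0 gna_multilinear); apply: subspace0 span.
pose P u := basis_or_V u /\ exists g, Lg g u.
have P_ext m (f : 'I_m -> L) q : (forall r, P (f r)) -> P (ext 0 f q).
  move=> Pf; case: (ext_cases f 0 q) => [-> | [r ->]] //.
  by split; [right; apply: subspace0 qmb_subspaceV | exists 0; apply: subspace0 (gna_subspace 0)].
have Px r : Lg (hdeg Lg (x r)) (x r) by apply: hdegP; rewrite ffunE; apply: qmb_basis_hom.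
have Py p : P (y p).
  have [-> | /yBV [[c ->] | [Vy hom_y]]] := eqVneq p k.
  - by rewrite yk; split; [right | exists (\sum_(r < n) hdeg Lg (x r)); apply: gna_hom].
  - by split; [left; exists c | apply: qmb_basis_hom].
  - by split; [right |].
pose y' (q : 'I_n.-1) := ext 0 y (if (q < k)%N then val q else q.+1).
have Py' q : P (y' q) by apply: P_ext.
have := gLt k Px (fun q => hdegP (proj2 (Py' q))); cbv zeta.
rewrite (reinsert_slot (mu x) (fun q => erefl)) -yk slot_id => ->.
apply: subspace_sum => // ip _; apply: subspace_sum => // jp _.
apply: subspace_sum => // s1 _; apply: subspace_sum => // s2 _.
apply: (subspaceZ span); apply: (gLt_term_in_span (ii := ii) (pc := pc) (jp := jp)) => //.
- by move=> p; rewrite ffunE.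
- move=> q; rewrite ffunE; case: ifP => _; first by case: (P_ext _ _ q (fun r => Py' (s2 r))).
  case: ifP => _; first by left; exists (ii (s1 ip)); rewrite ffunE.
  by case: (P_ext _ _ q.-1 (fun r => Py' (s2 r))).
- by rewrite ffunE ltnn eqxx ffunE.
Qed.

Lemma lspan_basis_or_hom_V u : lspan basis_or_hom_V u.
Proof.
have span := lspan_subspace basis_or_hom_V.
have [v [w [Vv [Ww ->]]]] := qmb_addVW u; apply: (subspaceD span).
  have [gs [c [_ [Lg_c [V_c ->]]]]] := (proj2 qmb_gradedV) v Vv.
  rewrite big_seq; apply: (subspace_sum span) => g gs_g.
  by apply: lspan_gen; right; split; [apply: V_c | exists g].
have [m [f [a ->]]] := qmb_basis_span Ww.
apply: (subspace_sum span) => t _; apply: (subspaceZ span).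
by apply: lspan_gen; left; exists (f t).
Qed.

Lemma ideal_gen_product i (s : 'S_n) (x : {ffun 'I_n -> L}) :
  (forall r : 'I_n, val r = 0%N -> lspan (ideal_gen i) (x r)) ->
  lspan (ideal_gen i) (permprod mu s x).
Proof.
move=> x0_span; pose k := (s^-1)%g ord_0.
pose P p := if p == k then ideal_gen i else basis_or_hom_V.
have BV u : basis_or_hom_V u -> basis_or_V u by case=> [|[]]; [left | right].
apply: (multilinear_lspan gna_multilinear (P := P) (lspan_subspace _)) => [z Pz | p].
  have := Pz k; rewrite /P eqxx => -[[c [zk conn_ic]] | [ii [zk [[pc conn_ic] Vzk]]]].
    apply: (product_connected_slot_in_span _ zk conn_ic) => p.
    have [-> | neq_pk] := eqVneq p k; first by left; exists c.
    by apply: BV; have := Pz p; rewrite /P (negbTE neq_pk).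
  rewrite zk in Vzk; apply: (product_V_generator_in_span conn_ic Vzk zk) => p neq_pk.
  by have := Pz p; rewrite /P (negbTE neq_pk).
rewrite ffunE /P; case: eqP => [-> | _]; last exact: lspan_basis_or_hom_V.
by rewrite /k permKV; apply: x0_span.
Qed.

Lemma ideal_gen_hom i u : ideal_gen i u -> exists g, Lg g u.
Proof.
case=> [[c [-> _]] | [ii [-> _]]]; first exact: qmb_basis_hom.
exists (\sum_(r < n) hdeg Lg (e (ii r))); apply: gna_hom => r.
by rewrite ffunE; apply: hdegP; apply: qmb_basis_hom.
Qed.

Hypothesis simple : simple_gLt Lg mu.

Lemma connected_all i j : connected i j.
Proof.
pose S := lspan (ideal_gen i).
have S_ideal : gLt_ideal Lg mu S.
  split; first exact: lspan_graded gna_subspace (@ideal_gen_hom i).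
  by move=> s x; apply: ideal_gen_product.
have S_ei : S (e i) by apply: lspan_gen; left; exists i; split=> //; apply: connected_refl.
case: (simple S_ideal) => [S0 | S_all].
  by have := basis_neq0 i; rewrite (S0 (e i)).1 ?eqxx.
apply: (lspan_basis_in_or_V_basis (P := connected i)); apply: lspan_mono (S_all (e j)).
by move=> u [[c [-> conn_ic]] | [ii [_ [_ Vu]]]]; [left; exists c | right].
Qed.

End QuasiMultiplicativeBasis.

Theorem corollary3p10 (F : fieldType) (G : zmodType) (eps : G -> G -> F) (n : nat)
  (L : lmodType F) (Lg : G -> L -> Prop) (mu : {ffun 'I_n -> L} -> L)
  (alpha : 'I_n -> 'I_n -> 'I_n -> 'S_n -> 'S_n.-1 -> F)
  (V W : L -> Prop) (I : Type) (e : I -> L) :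
  (2 <= n)%N ->
  bicharacter eps ->
  graded_nary_algebra Lg mu ->
  color_gLt eps Lg mu alpha ->
  quasi_mult_basis Lg mu V W e ->
  simple_gLt Lg mu ->
  forall i j : I, connected mu e V i j.
Proof.
(* Peq equips I with a classical decidable equality; the color signs only enter the
   gLt identity as scalars. *)
elim/Peq: I => I in e *.
move=> n_ge2 _ gna gLt qmb simple i j.
exact: (connected_all qmb n_ge2 gna gLt simple).
Qed.
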